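(* Let $m$ be a positive integer, let $s \in S_m$ be a cycle of length $k < m$, and let $a$ be a positive divisor of $k$ with $(k,a) \neq (4,2)$. Then there exists $x \in S_m$ such that $\langle s \rangle \cap \langle s \rangle^x = \langle s^a \rangle$. *)

From mathcomp Require Import all_boot all_fingroup.
Set Implicit Arguments. Unset Strict Implicit. Unset Printing Implicit Defensive.

Definition is_cycle_of_length (T : finType) (s : {perm T}) (k : nat) : Prop :=
  exists x : T, #|porbit s x| = k /\ (forall y : T, y \notin porbit s x -> s y = y).

From mathcomp Require Import all_boot all_fingroup zify.

Set Implicit Arguments.
Unset Strict Implicit.
Unset Printing Implicit Defensive.

(* Index the points of the cycle as c_i = s^i c, i mod k.  If a = k, conjugate
   by a transposition exchanging c with a point p fixed by s: an element of the
   intersection fixes p, so the corresponding power of s fixes c and is trivial.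
   If a < k, let x be the cycle of s^a through c, i.e. c_i |-> c_(i+a) when a | i
   and the identity elsewhere.  It commutes with s^a, so <s^a> lies in the
   intersection.  Conversely, if x conjugates s^j to s^n then, with
   d(i) = a if a | i and 0 otherwise, d(i + j) - d(i) = n - j mod k for every i.
   If a does not divide j, then i = 0 and i = -j give 2a = 0 mod k, so k = 2a;
   as (k, a) <> (4, 2) we get a >= 3, so some i has a dividing neither i nor
   i + j, which forces a = 0 mod k. *)

Definition dvd_shift a i := (i + (if a %| i then a else 0))%N.

Lemma exists_ndvdn_pair a j : (2 < a)%N ->
  exists2 i, ~~ (a %| i)%N & ~~ (a %| i + j)%N.
Proof.
move=> a_gt2; have a_ndvd1 : ~~ (a %| 1)%N by rewrite dvdn1 gtn_eqF // ltnW.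
have [a_dvd_1j | ] := boolP (a %| 1 + j)%N; last by exists 1%N.
exists 2%N; first by apply: contraL a_gt2 => /dvdn_leq; rewrite -leqNgt; apply.
by rewrite -[2%N]/(1 + 1)%N -addnA dvdn_addl.
Qed.

Lemma dvdn_intertwine_dvd_shift k a j n :
  (0 < a < k)%N -> (a %| k)%N -> (k, a) != (4, 2)%N ->
  (forall i, dvd_shift a (i + j) = dvd_shift a i + n %[mod k]) -> (a %| j)%N.
Proof.
move=> /andP[a_gt0 a_lt_k] a_dvd_k k42 intertwine; apply/contraT => a_ndvd_j.
have jump i : (j + (if a %| i + j then a else 0) =
               (if a %| i then a else 0) + n %[mod k])%N.
  by have /eqP := intertwine i; rewrite /dvd_shift -!addnA eqn_modDl => /eqP.
have at_0 : (j = a + n %[mod k])%N.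
  by have := jump 0%N; rewrite add0n (negbTE a_ndvd_j) dvdn0 addn0.
have at_neg_j : (j + a = n %[mod k])%N.
  (* i = j * k.-1 plays the role of -j mod k *)
  have a_dvd_jk : (a %| j * k.-1 + j)%N.
    have k_gt0 : (0 < k)%N by apply: ltn_trans a_lt_k.
    by rewrite -{2}[j]muln1 -mulnDr addn1 prednK ?dvdn_mull.
  have a_ndvd : ~~ (a %| j * k.-1)%N.
    by apply: contra a_ndvd_j => a_dvd; rewrite -(dvdn_addr _ a_dvd).
  by have := jump (j * k.-1)%N; rewrite a_dvd_jk (negbTE a_ndvd).
have k_eq_2a : k = (a + a)%N.
  have /dvdnP[t def_aa] : (k %| a + a)%N.
    have /eqP : (j + (a + a) = j + 0 %[mod k])%N.
      by rewrite addnA -modnDml at_neg_j modnDml addnC -at_0 addn0.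
    by rewrite eqn_modDl mod0n.
  by move: def_aa; clear -a_gt0 a_lt_k; case: t => [|[|t]]; lia.
have a_gt2 : (2 < a)%N.
  have a_neq1 : a != 1%N by apply: contraNneq a_ndvd_j => ->; rewrite dvd1n.
  have a_neq2 : a != 2%N by apply: contraNneq k42 => a2; rewrite k_eq_2a a2.
  by clear -a_gt0 a_neq1 a_neq2; lia.
have [i a_ndvd_i a_ndvd_ij] := exists_ndvdn_pair j a_gt2.
have /eqP : (0 + n = a + n %[mod k])%N.
  by have := jump i; rewrite (negbTE a_ndvd_i) (negbTE a_ndvd_ij) addn0 => <-.
by rewrite eqn_modDr mod0n eq_sym modn_small // gtn_eqF.
Qed.

Local Open Scope group_scope.

Section CycleOfPerm.

Variables (T : finType) (u : {perm T}) (c : T).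

Definition pcycle := restr_perm (porbit u c) u.

Lemma pcycleE z : pcycle z = if z \in porbit u c then u z else z.
Proof.
case: ifP => [z_in | /negbT]; last exact/out_perm/restr_perm_on.
apply: restr_permE z_in; rewrite porbitE.
by apply: subsetP (cycle_id u); apply: acts_orbit; rewrite subsetT.
Qed.

Lemma conjg_pcycle : u ^ pcycle = u.
Proof. exact/conjg_fixP/commgP/commute_sym/restr_perm_commute. Qed.

End CycleOfPerm.

Section PowersOfCycle.

Variables (T : finType) (s : {perm T}) (c : T).
Local Notation k := #|porbit s c|.

Lemma expg_porbit_mod i : (s ^+ i) c = (s ^+ (i %% k)) c.
Proof.
have skc : (s ^+ k) c = c by rewrite permX iter_porbit.
by rewrite {1}(divn_eq i k) expgD permM mulnC expgM (permX_fix _ skc).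
Qed.

Lemma eq_expg_porbit i j : ((s ^+ i) c == (s ^+ j) c) = (i == j %[mod k]).
Proof.
apply/eqP/eqP => [|eq_ij]; last by rewrite expg_porbit_mod eq_ij -expg_porbit_mod.
have k_gt0 : (0 < k)%N by rewrite lt0n card_porbit_neq0.
rewrite (expg_porbit_mod i) (expg_porbit_mod j) !permX => eq_ij.
apply/eqP; rewrite -(nth_uniq c _ _ (uniq_traject_porbit s c)).
  by rewrite !nth_traject ?ltn_pmod // eq_ij.
all: by rewrite size_traject ltn_pmod.
Qed.

Hypothesis s_cycle : forall y, y \notin porbit s c -> s y = y.

Lemma cycle_expg_eq1 j : (s ^+ j) c = c -> s ^+ j = 1.
Proof.
move=> sjc; apply/permP => z; rewrite perm1.
have [/porbitP[i ->] | /s_cycle/permX_fix //] := boolP (z \in porbit s c).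
by rewrite -permM -expgD addnC expgD permM sjc.
Qed.

Lemma expg_card_porbit : s ^+ k = 1.
Proof. by apply: cycle_expg_eq1; rewrite permX iter_porbit. Qed.

Lemma cycle_cap_conj_tperm p :
  p \notin porbit s c -> <[s]> :&: <[s]> :^ tperm c p = 1.
Proof.
move=> p_out; apply/trivgP/subsetP => _ /setIP[/cycleP[n ->]].
rewrite mem_conjg inE => /cycleP[j def_j].
have sjc : (s ^+ j) c = c.
  rewrite -def_j conjgE invgK tpermV !permM tpermL.
  by rewrite (permX_fix _ (s_cycle p_out)) tpermR.
by rewrite -(conjg_eq1 _ (tperm c p)^-1) def_j cycle_expg_eq1.
Qed.

Variable a : nat.
Hypothesis a_dvd_k : (a %| k)%N.

Lemma mem_porbit_expg i : ((s ^+ i) c \in porbit (s ^+ a) c) = (a %| i)%N.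
Proof.
apply/porbitP/idP => [[q] | /dvdnP[q ->]]; last by exists q; rewrite mulnC expgM.
rewrite -expgM => /eqP; rewrite eq_expg_porbit => /eqP/(congr1 (modn^~ a)).
by rewrite !modn_dvdm // modnMr => /eqP.
Qed.

Lemma pcycle_expg i : pcycle (s ^+ a) c ((s ^+ i) c) = (s ^+ dvd_shift a i) c.
Proof.
rewrite pcycleE mem_porbit_expg /dvd_shift.
by case: ifP => _; rewrite ?addn0 // expgD permM.
Qed.

Lemma dvdn_conj_pcycle j n : (0 < a < k)%N -> (k, a) != (4, 2)%N ->
  (s ^+ j) ^ pcycle (s ^+ a) c = s ^+ n -> (a %| j)%N.
Proof.
move=> a_bounds k42 def_n.
apply: (dvdn_intertwine_dvd_shift (n := n) a_bounds a_dvd_k k42) => i; apply/eqP.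
set x := pcycle (s ^+ a) c.
have : x ((s ^+ j) ((s ^+ i) c)) = (s ^+ n) (x ((s ^+ i) c)).
  by rewrite -def_n conjgE !permM permK.
rewrite -[(s ^+ j) _]permM -expgD !pcycle_expg -permM -expgD => /eqP.
by rewrite eq_expg_porbit.
Qed.

Lemma cycle_cap_conj_pcycle : (0 < a < k)%N -> (k, a) != (4, 2)%N ->
  <[s]> :&: <[s]> :^ pcycle (s ^+ a) c = <[s ^+ a]>.
Proof.
move=> a_bounds k42; set x := pcycle (s ^+ a) c.
have Jx : <[s ^+ a]> :^ x = <[s ^+ a]> by rewrite -cycleJ conjg_pcycle.
apply/eqP; rewrite eqEsubset subsetI -{3}Jx conjSg !cycle_subG mem_cycle !andbT.
apply/subsetP => _ /setIP[/cycleP[n ->]]; rewrite mem_conjg => /cycleP[j def_j].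
have /dvdnP[q def_q] : (a %| j)%N.
  by apply: (dvdn_conj_pcycle a_bounds k42); rewrite -def_j conjgKV.
rewrite -(conjgKV x (s ^+ n)) def_j def_q mulnC expgM -Jx memJ_conjg.
exact: mem_cycle.
Qed.

End PowersOfCycle.

Theorem lemma3p5 (m : nat) (s : 'S_m) (k a : nat) :
  (0 < m)%N -> is_cycle_of_length s k -> (k < m)%N ->
  (0 < a)%N -> (a %| k)%N -> (k, a) != (4, 2)%N ->
  exists x : 'S_m, <[s]> :&: (<[s]> :^ x) = <[s ^+ a]>.
Proof.
move=> _ [c [<- s_cycle]] k_lt_m a_gt0 a_dvd_k k42.
have [a_lt_k | a_ge_k] := ltnP a #|porbit s c|.
  by exists (pcycle (s ^+ a) c); apply: cycle_cap_conj_pcycle; rewrite ?a_gt0.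
have -> : a = #|porbit s c|.
  by apply/eqP; rewrite eqn_leq a_ge_k dvdn_leq // lt0n card_porbit_neq0.
have [p _ p_out] : exists2 p, p \in [set: 'I_m] & p \notin porbit s c.
  apply/subsetPn; apply: contraL k_lt_m => /subset_leq_card.
  by rewrite cardsT card_ord leqNgt.
exists (tperm c p); rewrite expg_card_porbit // cycle1.
exact: cycle_cap_conj_tperm.
Qed.
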